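(* Let $\{S_i\}_{i\in\mathcal I}$ be a finite family of contracting similarities on a compact subset $X$ of $\mathbb{R}^n$, let $C\subseteq X$ be non-empty and compact, let $F_C$ be the inhomogeneous attractor and $F_\emptyset$ the attractor. Then \[ \max\{\overline{\dim}_{\mathrm B}F_\emptyset,\ \overline{\dim}_{\mathrm B}C\}\le\overline{\dim}_{\mathrm B}F_C\le\max\{s^*,\ \overline{\dim}_{\mathrm B}C\}, \] where $s^*$ is the modified similarity dimension defined in the context.
   Context: $F_C$ is the unique non-empty compact set with $F_C=\bigcup_iS_i(F_C)\cup C$ and $F_\emptyset$ the unique non-empty compact set with $F_\emptyset=\bigcup_iS_i(F_\emptyset)$. Let $c_i$ be the contraction ratio of $S_i$. $\mathcal I^*$ is the set of finite words over $\mathcal I$ (the empty word corresponds to the identity map with ratio $1$); for $I=(i_1,\dots,i_k)$, $S_I=S_{i_1}\circ\cdots\circ S_{i_k}$, $c_I=c_{i_1}\cdots c_{i_k}$, and $I^\dagger=(i_1,\dots,i_{k-1})$. For $r\in(0,1)$, $\mathcal I(r)=\{I\in\mathcal I^*: c_I\le r<c_{I^\dagger}\}$. Write $I\sim J$ if $S_I=S_J$, and let $\mathcal I(r)/\sim$ denote a set of representatives of the equivalence classes in $\mathcal I(r)$. Let $\alpha(r)$ be the unique solution of $\sum_{I\in\mathcal I(r)/\sim}c_I^{\alpha(r)}=1$. The modified similarity dimension is $s^*=\lim_{r\to0}\alpha(r)=\inf_{r\in(0,1)}\alpha(r)$. $\overline{\dim}_{\mathrm B}$ is upper box dimension. *)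

From HB Require Import structures.
From mathcomp Require Import all_boot all_order all_algebra.
From mathcomp Require Import all_classical all_reals all_analysis.
Set Implicit Arguments. Unset Strict Implicit. Unset Printing Implicit Defensive.
Import Order.TTheory GRing.Theory Num.Theory.
Import numFieldNormedType.Exports.
Local Open Scope classical_set_scope.
Local Open Scope ring_scope.

Section Defs.
Variables (R : realType) (n : nat).
Local Notation V := 'rV[R]_n.

Definition eucl_dist (x y : V) : R :=
  Num.sqrt (\sum_(i < n) (x ord0 i - y ord0 i) ^+ 2).

Definition coverable (A : set V) (d : R) (k : nat) : Prop :=
  exists U : 'I_k -> set V,
    (forall j x y, U j x -> U j y -> eucl_dist x y <= d) /\
    A `<=` \bigcup_(j in setT) U j.

(* N_d(A): the smallest number of sets of diameter at most d covering A
   (+oo if there is no finite cover) *)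
Definition covnum (A : set V) (d : R) : \bar R :=
  ereal_inf [set (k%:R)%:E | k in coverable A d].

Definition box_ratio (A : set V) (d : R) : \bar R :=
  match covnum A d with
  | EFin N => (ln N / - ln d)%:E
  | _ => +oo%E
  end.

(* upper box dimension: limsup_{d -> 0+} log N_d(A) / (- log d) *)
Definition upper_box_dim (A : set V) : \bar R :=
  ereal_inf [set ereal_sup [set box_ratio A d | d in [set d | 0 < d < e]]
            | e in [set e : R | 0 < e < 1]].

Variable (I : finType).

Definition wmap (S : I -> V -> V) (w : seq I) : V -> V :=
  foldr (fun i f => S i \o f) id w.

Definition wratio (c : I -> R) (w : seq I) : R := \prod_(i <- w) c i.

Definition wdagger (w : seq I) : seq I := take (size w).-1 w.

Definition in_Ir (c : I -> R) (r : R) (w : seq I) : Prop :=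
  wratio c w <= r < wratio c (wdagger w).

Definition wequiv (X : set V) (S : I -> V -> V) (w v : seq I) : Prop :=
  forall x, X x -> wmap S w x = wmap S v x.

(* a solves  sum_{I in I(r)/~} c_I^a = 1  for a set of representatives reps *)
Definition alpha_spec (X : set V) (S : I -> V -> V) (c : I -> R) (r a : R)
  : Prop :=
  exists reps : seq (seq I),
    [/\ uniq reps,
        (forall w, w \in reps -> in_Ir c r w),
        (forall w, in_Ir c r w -> exists2 v, v \in reps & wequiv X S w v),
        (forall v1 v2, v1 \in reps -> v2 \in reps -> wequiv X S v1 v2 -> v1 = v2)
      & \sum_(w <- reps) (wratio c w) `^ a = 1].

Definition alpha (X : set V) (S : I -> V -> V) (c : I -> R) (r : R) : R :=
  xget 0 [set a | alpha_spec X S c r a].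

Definition s_star (X : set V) (S : I -> V -> V) (c : I -> R) : R :=
  inf [set alpha X S c r | r in [set r : R | 0 < r < 1]].

End Defs.

From HB Require Import structures.
From mathcomp Require Import all_boot all_order all_algebra.
From mathcomp Require Import all_classical all_reals all_analysis.
From mathcomp Require Import zify ring lra.
Import Order.TTheory GRing.Theory Num.Theory.
Import numFieldNormedType.Exports.
Local Open Scope classical_set_scope.
Local Open Scope ring_scope.
Set Implicit Arguments. Unset Strict Implicit. Unset Printing Implicit Defensive.

(* The lower bound is monotonicity of the upper box dimension, as C and F_0 lie in F_C.
   For the upper bound fix u > max(s*, dim C), so that some scale rho has
   theta := sum_(v in I(rho)/~) c_v^u < 1. Unfolding F_C = U_i S_i(F_C) u C along words
   shows F_C is covered by the S_v(F_C), v in I(rho)/~, and finitely many S_w(C). Covering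
   S_v(F_C) at scale d costs as much as covering F_C at scale d / c_v, so a bound
   N_d(F_C) <= A d^-u propagates from the diameter of X downwards, one factor rho at a
   time, provided A theta + (cost of the S_w(C)) <= A, which holds for A large. *)

Section Covering.
Variables (R : realType) (n : nat).
Local Notation V := 'rV[R]_n.
Local Notation dist := (@eucl_dist R n).
Implicit Types (A B : set V) (d : R).

Lemma coverable_subset A B d k : A `<=` B -> coverable B d k -> coverable A d k.
Proof. by move=> AB [U [HU HB]]; exists U; split => // x /AB /HB. Qed.

Lemma coverable_le_diam A d d' k : d <= d' -> coverable A d k -> coverable A d' k.
Proof.
move=> dd' [U [HU HA]]; exists U; split => // j x y Ux Uy.
exact: le_trans (HU _ _ _ Ux Uy) dd'.
Qed.

Lemma coverable1 A d :
  (forall x y, A x -> A y -> dist x y <= d) -> coverable A d 1.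
Proof. by move=> HA; exists (fun=> A); split => // x Ax; exists ord0. Qed.

Lemma coverableU A B d k m :
  coverable A d k -> coverable B d m -> coverable (A `|` B) d (k + m).
Proof.
move=> [U [HU HA]] [W [HW HB]].
exists (fun j : 'I_(k + m) =>
  [set x | (exists i : 'I_k, nat_of_ord i = nat_of_ord j /\ U i x) \/
           (exists i : 'I_m, (k + nat_of_ord i = nat_of_ord j)%N /\ W i x)]).
split.
  move=> j x y [[i1 [e1 U1]]|[i1 [e1 U1]]] [[i2 [e2 U2]]|[i2 [e2 U2]]].
  - have e12 : i1 = i2 by apply: val_inj => /=; rewrite e1 e2.
    by subst i2; exact: HU U1 U2.
  - have := ltn_ord i1; lia.
  - have := ltn_ord i2; lia.
  - have e12 : i1 = i2 by apply: val_inj => /=; lia.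
    by subst i2; exact: HW U1 U2.
move=> x [/HA [i _ Uix]|/HB [i _ Wix]].
  have im : (i < k + m)%N by apply: leq_trans (ltn_ord i) (leq_addr _ _).
  by exists (Ordinal im) => //; left; exists i.
have im : (k + i < k + m)%N by rewrite ltn_add2l.
by exists (Ordinal im) => //; right; exists i.
Qed.

Lemma coverable_bigcup (J : eqType) (s : seq J) (F : J -> set V) d (b : J -> R) :
  (forall j, j \in s -> exists m, coverable (F j) d m /\ m%:R <= b j) ->
  exists m, coverable (\bigcup_(j in [set j | j \in s]) F j) d m /\
            m%:R <= \sum_(j <- s) b j.
Proof.
elim: s => [|j s IH] H.
  exists 0%N; split; last by rewrite big_nil.
  by exists (fun=> set0); split => // x [].
have [m1 [h1 b1]] := H j (mem_head _ _).
have [m2 [h2 b2]] : exists m, coverable (\bigcup_(j in [set j | j \in s]) F j) d m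
                              /\ m%:R <= \sum_(j <- s) b j.
  by apply: IH => v hv; apply: H; rewrite inE hv orbT.
exists (m1 + m2)%N; split; last by rewrite natrD big_cons lerD.
apply: coverable_subset (coverableU h1 h2) => x [v /=].
by rewrite inE => /orP[/eqP ->|hv] Fx; [left|right; exists v].
Qed.

Lemma coverable_image (X A : set V) (f : V -> V) (c d : R) k :
  A `<=` X -> (forall x y, X x -> X y -> dist (f x) (f y) = c * dist x y) ->
  0 <= c -> coverable A d k -> coverable (f @` A) (c * d) k.
Proof.
move=> AX Hf c0 [U [HU HA]].
exists (fun j => f @` (U j `&` X)); split.
  move=> j _ _ [x [Ux Xx] <-] [y [Uy Xy] <-].
  by rewrite Hf // ler_wpM2l // (HU _ _ _ Ux Uy).
move=> _ [x Ax <-]; have [j _ Ujx] := HA x Ax.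
by exists j => //; exists x => //; split => //; exact: AX.
Qed.

Lemma coverable_gt0 A d k : A !=set0 -> coverable A d k -> (0 < k)%N.
Proof.
move=> [x Ax] [U [_ HA]]; case: k U HA => // U HA.
by have [[j jl] _ _] := HA x Ax.
Qed.

Lemma covnum_le A d k : coverable A d k -> (covnum A d <= k%:R%:E)%E.
Proof. by move=> H; apply: ereal_inf_lbound; exists k. Qed.

Lemma covnum_ge1 A d : A !=set0 -> (1 <= covnum A d)%E.
Proof.
move=> A0; apply: le_ereal_inf_tmp => _ [k Hk <-].
by rewrite lee_fin ler1n; exact: coverable_gt0 Hk.
Qed.

Lemma covnum_subset A B d : A `<=` B -> (covnum A d <= covnum B d)%E.
Proof.
move=> AB; apply: le_ereal_inf_tmp => _ [k Hk <-].
by apply: ereal_inf_lbound; exists k => //; exact: coverable_subset Hk.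
Qed.

Lemma covnum_lt A d x :
  (covnum A d < x%:E)%E -> exists k, coverable A d k /\ k%:R < x.
Proof. by move=> /ereal_inf_lt [_ [k Hk <-]]; rewrite lte_fin; exists k. Qed.

Lemma oppr_ln_gt0 d : 0 < d < 1 -> 0 < - ln d.
Proof. by move=> hd; rewrite oppr_gt0 ln_lt0. Qed.

Lemma box_ratio_subset A B d : A `<=` B -> A !=set0 -> 0 < d < 1 ->
  (box_ratio A d <= box_ratio B d)%E.
Proof.
move=> AB A0 hd; rewrite /box_ratio.
have B0 : B !=set0 by case: A0 => x /AB; exists x.
have hA := covnum_ge1 d A0; have hB := covnum_ge1 d B0.
have hAB := covnum_subset d AB.
case eB: (covnum B d) => [NB||]; [|by rewrite leey|by rewrite eB in hB].
case eA: (covnum A d) => [NA||]; rewrite ?eA ?eB ?lee_fin in hA hAB => //.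
have NA0 : 0 < NA := lt_le_trans ltr01 hA.
rewrite lee_fin ler_pM2r ?invr_gt0 ?oppr_ln_gt0 // ler_ln ?posrE //.
exact: lt_le_trans NA0 hAB.
Qed.

Lemma box_ratio_le A d k (b : R) : A !=set0 -> 0 < d < 1 ->
  coverable A d k -> k%:R <= b -> (box_ratio A d <= (ln b / - ln d)%:E)%E.
Proof.
move=> A0 hd Hk kb; rewrite /box_ratio.
have h1 := covnum_ge1 d A0; have h2 := covnum_le Hk.
case eA: (covnum A d) => [N||]; rewrite ?eA ?lee_fin in h1 h2 => //.
have N0 : 0 < N by exact: lt_le_trans ltr01 h1.
rewrite lee_fin ler_pM2r ?invr_gt0 ?oppr_ln_gt0 // ler_ln ?posrE //.
  exact: le_trans h2 kb.
exact: lt_le_trans N0 (le_trans h2 kb).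
Qed.

Lemma box_ratio_lt A d (t : R) : A !=set0 -> 0 < d < 1 ->
  (box_ratio A d < t%:E)%E -> exists k, coverable A d k /\ k%:R < d `^ (- t).
Proof.
move=> A0 hd; rewrite /box_ratio.
have h1 := covnum_ge1 d A0.
case eA: (covnum A d) => [N||] //; rewrite ?eA ?lee_fin in h1 => // hlt.
apply: covnum_lt; rewrite eA lte_fin.
rewrite lte_fin ltr_pdivrMr ?oppr_ln_gt0 // in hlt.
have d0 : 0 < d by case/andP: hd.
rewrite -ltr_ln ?posrE ?powR_gt0 //; last exact: lt_le_trans ltr01 h1.
by rewrite ln_powR mulNr -mulrN.
Qed.

Lemma upper_box_dim_subset A B : A `<=` B -> A !=set0 ->
  (upper_box_dim A <= upper_box_dim B)%E.
Proof.
move=> AB A0; apply: le_ereal_inf_tmp => _ [e he <-].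
apply: le_trans (ereal_inf_lbound _) _; first by exists e.
apply: ge_ereal_sup => _ [d hd <-].
apply: le_trans (box_ratio_subset AB A0 _) _.
  by case/andP: he => e0 e1; case/andP: hd => d0 de; rewrite d0 (lt_trans de e1).
by apply: ereal_sup_ubound; exists d.
Qed.

Lemma upper_box_dim_lt A (t : R) : (upper_box_dim A < t%:E)%E ->
  exists e : R, 0 < e < 1 /\ forall d, 0 < d < e -> (box_ratio A d < t%:E)%E.
Proof.
move=> /ereal_inf_lt [_ [e he <-] hlt]; exists e; split => // d hd.
by apply: le_lt_trans hlt; apply: ereal_sup_ubound; exists d.
Qed.

Lemma upper_box_dim_le A (x : \bar R) (e : R) : 0 < e < 1 ->
  (forall d, 0 < d < e -> (box_ratio A d <= x)%E) -> (upper_box_dim A <= x)%E.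
Proof.
move=> he H; apply: le_trans (ereal_inf_lbound _) _; first by exists e.
by apply: ge_ereal_sup => _ [d hd <-]; apply: H.
Qed.

End Covering.

Lemma expr_lt (R : realType) (q eps : R) : 0 < q < 1 -> 0 < eps ->
  exists L, q ^+ L < eps.
Proof.
move=> /andP[q0 q1] e0.
have q_norm_lt1 : `|q| < 1 by rewrite ger0_norm ?ltW.
have /cvgr0Pnorm_lt/(_ _ e0) [L _ HL] := cvg_expr q_norm_lt1.
by exists L; have := HL L (leqnn L); rewrite /= ger0_norm ?exprn_ge0 ?ltW.
Qed.

Section Words.
Variables (R : realType) (n : nat) (I : finType).
Local Notation V := 'rV[R]_n.
Local Notation dist := (@eucl_dist R n).
Variables (X : set V) (S : I -> V -> V) (c : I -> R).
Hypothesis hc : forall i, 0 < c i < 1.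
Hypothesis hSX : forall i x, X x -> X (S i x).
Hypothesis hsim : forall i x y, X x -> X y ->
  dist (S i x) (S i y) = c i * dist x y.

Lemma wmap_cat v w x : wmap S (v ++ w) x = wmap S v (wmap S w x).
Proof. by elim: v => [|i v IH] //=; rewrite IH. Qed.

Lemma wratio_cons i w : wratio c (i :: w) = c i * wratio c w.
Proof. by rewrite /wratio big_cons. Qed.

Lemma wratio_gt0 w : 0 < wratio c w.
Proof.
elim: w => [|i w IH]; first by rewrite /wratio big_nil.
by rewrite wratio_cons mulr_gt0 //; case/andP: (hc i).
Qed.

Lemma wratio_le1 w : wratio c w <= 1.
Proof.
elim: w => [|i w IH]; first by rewrite /wratio big_nil.
rewrite wratio_cons; case/andP: (hc i) => c0 c1.
by rewrite mulr_ile1 ?(ltW c0) ?(ltW c1) ?(ltW (wratio_gt0 w)).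
Qed.

Lemma wratio_le_expr (q : R) w : (forall i, c i <= q) -> wratio c w <= q ^+ size w.
Proof.
move=> hq; elim: w => [|i w IH]; first by rewrite /wratio big_nil.
rewrite wratio_cons /= exprS; apply: ler_pM => //.
- by case/andP: (hc i) => /ltW.
- exact: ltW (wratio_gt0 w).
Qed.

Lemma wmap_in w x : X x -> X (wmap S w x).
Proof. by elim: w => [|i w IH] //= Xx; apply: hSX; apply: IH. Qed.

Lemma wmap_dist w x y : X x -> X y ->
  dist (wmap S w x) (wmap S w y) = wratio c w * dist x y.
Proof.
move=> Xx Xy; elim: w => [|i w IH]; first by rewrite /wratio big_nil mul1r.
rewrite /= hsim; [|exact: wmap_in|exact: wmap_in].
by rewrite IH wratio_cons mulrA.
Qed.

Lemma contraction_ratio_bound : exists q : R, 0 < q < 1 /\ forall i, c i <= q.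
Proof.
exists (\big[Num.max/2^-1]_i c i); split; last by move=> i; exact: le_bigmax.
have half_gt0 : 0 < 2^-1 :> R by rewrite invr_gt0.
have half_lt1 : 2^-1 < 1 :> R by rewrite invf_lt1 ?ltr1n.
rewrite (lt_le_trans half_gt0 (bigmax_ge_id _ _ _ _)) /=.
by apply: bigmax_lt => // i _; case/andP: (hc i).
Qed.

Lemma size_lt_of_wratio_gt (q rho : R) L w : 0 < q < 1 -> (forall i, c i <= q) ->
  q ^+ L < rho -> rho < wratio c w -> (size w < L)%N.
Proof.
move=> /andP[q0 q1] hq hL hw; rewrite ltnNge; apply/negP => Lw.
have qLw : q ^+ size w <= q ^+ L by rewrite ler_wiXn2l ?ltW.
have := le_lt_trans (le_trans (wratio_le_expr w hq) qLw) hL.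
by rewrite ltNge (ltW hw).
Qed.

Lemma wdagger_rcons (w : seq I) i : wdagger (rcons w i) = w.
Proof. by rewrite /wdagger size_rcons -cats1 take_size_cat. Qed.

Lemma in_Ir_size (q rho : R) L w : 0 < q < 1 -> (forall i, c i <= q) ->
  q ^+ L < rho -> in_Ir c rho w -> (size w <= L)%N.
Proof.
move=> hq Hq hL /andP[_ /(size_lt_of_wratio_gt hq Hq hL)].
by rewrite /wdagger size_take; case: (size w) => //= k; rewrite ltnSn.
Qed.

Lemma exists_in_Ir (i0 : I) (rho : R) : 0 < rho < 1 -> exists w, in_Ir c rho w.
Proof.
move=> /andP[rho0 rho1].
have wratio_nseq k : wratio c (nseq k i0) = c i0 ^+ k.
  by rewrite /wratio big_nseq; elim: k => //= k ->; rewrite exprS.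
have [L hL] := expr_lt (hc i0) rho0.
have exP : exists k, wratio c (nseq k i0) <= rho by exists L; rewrite wratio_nseq ltW.
case: (ex_minnP exP) => k hk kmin.
exists (nseq k i0); rewrite /in_Ir hk /wdagger size_nseq.
case: k hk kmin => [|k] hk kmin.
  by rewrite wratio_nseq expr0 in hk; have := lt_le_trans rho1 hk; rewrite ltxx.
rewrite -{2}(addn1 k) nseqD take_size_cat ?size_nseq //= ltNge.
by apply/negP => /kmin; rewrite ltnn.
Qed.

Fixpoint words (m : nat) : seq (seq I) :=
  if m is m'.+1 then [::] :: [seq i :: w | i <- enum I, w <- words m']
  else [:: [::]].

Lemma mem_words m w : (size w <= m)%N -> w \in words m.
Proof.
elim: m w => [|m IH] [|i w] //=; rewrite ?inE ?eqxx //.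
rewrite ltnS => hw; apply/orP; right.
by apply: (allpairs_f (fun i w => i :: w)); rewrite ?mem_enum //; apply: IH.
Qed.

End Words.

Section PowRSums.
Variable R : realType.

Lemma powR_expR (x a : R) : 0 < x -> x `^ a = expR (a * ln x).
Proof. by move=> x0; rewrite /powR gt_eqF. Qed.

Lemma gtr_powR (x a b : R) : 0 < x < 1 -> a < b -> x `^ b < x `^ a.
Proof.
move=> /andP[x0 x1] ab; rewrite !powR_expR // ltr_expR.
have : ln x < 0 by rewrite ln_lt0 // x0 x1.
nra.
Qed.

Lemma continuous_powRr (x : R) : 0 < x -> continuous (powR x).
Proof.
move=> x0 a; rewrite (_ : powR x = fun b => expR (b * ln x)).
  by apply: continuous_comp; [exact: mulrr_continuous|exact: continuous_expR].
by apply: funext => b; exact: powR_expR.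
Qed.

Lemma continuous_sum (T : eqType) (s : seq T) (g : T -> R -> R) :
  (forall t, t \in s -> continuous (g t)) ->
  continuous (fun a => \sum_(t <- s) g t a).
Proof.
elim: s => [|t s IH] hg.
  by under [fun _ => _]funext do rewrite big_nil; exact: cst_continuous.
under [fun _ => _]funext do rewrite big_cons.
move=> a; apply: continuousD; first by apply: hg; rewrite mem_head.
by apply: IH => x xs; apply: hg; rewrite inE xs orbT.
Qed.

Section Sums.
Variables (T : eqType) (s : seq T) (f : T -> R).
Hypothesis s_neq0 : s != [::].

Lemma ltr_sum_powR (a b : R) : (forall t, t \in s -> 0 < f t < 1) -> a < b ->
  \sum_(t <- s) f t `^ b < \sum_(t <- s) f t `^ a.
Proof.
case: s s_neq0 => // t s' _ hf ab; rewrite !big_cons.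
apply: ltr_leD; first by apply: gtr_powR ab; apply: hf; rewrite mem_head.
rewrite big_seq_cond [leRHS]big_seq_cond; apply: ler_sum => x /andP[xs _].
by apply/ltW/(gtr_powR _ ab)/hf; rewrite inE xs orbT.
Qed.

(* The sum decreases from #|s| >= 1 at a = 0 to below 1 for large a. *)
Lemma sum_powR_eq1 (r : R) : r < 1 -> (forall t, t \in s -> 0 < f t <= r) ->
  exists a, \sum_(t <- s) f t `^ a = 1.
Proof.
move=> r1 hf.
have r0 : 0 < r.
  case: s s_neq0 hf => // t s' _ /(_ t (mem_head _ _)) /andP[ft0 ftr].
  exact: lt_le_trans ft0 ftr.
have r01 : 0 < r < 1 by rewrite r0 r1.
have inv_gt0 : 0 < (size s).+1%:R^-1 :> R by rewrite invr_gt0.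
have [K hK] := expr_lt r01 inv_gt0.
have sum0 : 1 <= \sum_(t <- s) f t `^ 0.
  case: s s_neq0 => // t s' _; rewrite big_cons powRr0 lerDl.
  by apply: sumr_ge0 => x _; exact: powR_ge0.
have sumK : \sum_(t <- s) f t `^ K%:R < 1.
  have le_rK : \sum_(t <- s) f t `^ K%:R <= \sum_(t <- s) r ^+ K.
    rewrite big_seq [leRHS]big_seq; apply: ler_sum => t /hf /andP[ft0 ftr].
    rewrite powR_mulrn ?(ltW ft0) //.
    by apply: lerXn2r; rewrite // nnegrE ltW // (lt_le_trans ft0).
  apply: le_lt_trans le_rK _.
  rewrite big_const_seq count_predT iter_addr_0 -mulr_natr.
  have : r ^+ K * (size s).+1%:R < 1 by rewrite -ltr_pdivlMr // div1r.
  apply: le_lt_trans; rewrite ler_wpM2l ?exprn_ge0 ?(ltW r0) //.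
  by rewrite -natr1 lerDl.
have [a _ fa] : exists2 a, a \in `[0, K%:R] & \sum_(t <- s) f t `^ a = 1.
  apply: IVT; first by rewrite ler0n.
    apply/continuous_subspaceT/continuous_sum => t /hf /andP[ft0 _].
    exact: continuous_powRr.
  by rewrite ge_min le_max (ltW sumK) sum0 orbT.
by exists a.
Qed.

End Sums.
End PowRSums.

Section PowRN.
Variable R : realType.
Implicit Types (u x y d : R).

Lemma ler_powRN u x y : 0 <= u -> 0 < x -> x <= y -> y `^ (- u) <= x `^ (- u).
Proof.
move=> u0 x0 xy; have y0 := lt_le_trans x0 xy.
rewrite !powR_expR // ler_expR.
have : ln x <= ln y by rewrite ler_ln ?posrE.
nra.
Qed.

Lemma mulr_powRN u x : 0 < x -> x `^ u * x `^ (- u) = 1.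
Proof. by move=> x0; rewrite !powR_expR // -expRD -expR0; congr expR; ring. Qed.

Lemma powRN_div u d x : 0 < d -> 0 < x -> (d / x) `^ (- u) = d `^ (- u) * x `^ u.
Proof.
move=> d0 x0; rewrite !powR_expR ?divr_gt0 // ln_div ?posrE // -expRD.
by congr expR; ring.
Qed.

Lemma le1_mulr_powRN u d x (A : R) : 0 <= u -> 0 < d -> d <= x -> x `^ u <= A ->
  1 <= A * d `^ (- u).
Proof.
move=> u0 d0 dx xA; have x0 := lt_le_trans d0 dx.
rewrite -(mulr_powRN u x0); apply: ler_pM; rewrite ?powR_ge0 //.
exact: ler_powRN.
Qed.

End PowRN.

Section Bounded.
Variables (R : realType) (n : nat).
Local Notation V := 'rV[R]_n.
Local Notation dist := (@eucl_dist R n).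

Lemma coord_le_dist (x y : V) i : `|x ord0 i - y ord0 i| <= dist x y.
Proof.
rewrite /eucl_dist -sqrtr_sqr ler_sqrt ?sumr_ge0 // => [|j _]; last exact: sqr_ge0.
by rewrite (bigD1 i) //= lerDl sumr_ge0 // => j _; exact: sqr_ge0.
Qed.

Lemma norm_le_dist (x y : V) : `|x - y| <= dist x y.
Proof.
rewrite [`|_|]mx_normrE; apply: bigmax_le; first exact: sqrtr_ge0.
by move=> [i j] _ /=; rewrite !mxE (ord1 i); exact: coord_le_dist.
Qed.

Lemma coord_le_norm (x : V) i : `|x ord0 i| <= `|x|.
Proof.
rewrite [`|x|]mx_normrE.
exact: (le_bigmax 0 (fun ij : 'I_1 * 'I_n => `|x ij.1 ij.2|) (ord0, i)).
Qed.

Lemma compact_dist_bounded (X : set V) : compact X ->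
  exists D : R, 0 < D /\ forall x y, X x -> X y -> dist x y <= D.
Proof.
move=> /compact_bounded [M [Mr HM]].
pose B := `|M| + 1.
have HB x : X x -> `|x| <= B.
  by apply: HM; rewrite /B (le_lt_trans (real_ler_norm Mr)) // ltrDl.
exists (Num.sqrt (((2 * B) ^+ 2) *+ n) + 1); split; first by rewrite ltr_wpDl ?sqrtr_ge0.
move=> x y Xx Xy.
suff h : dist x y <= Num.sqrt (((2 * B) ^+ 2) *+ n) by apply: le_trans h _; rewrite lerDl.
rewrite /eucl_dist ler_sqrt ?mulrn_wge0 ?sqr_ge0 //.
rewrite -[X in _ *+ X]card_ord -sumr_const.
apply: ler_sum => i _.
have := le_trans (coord_le_norm x i) (HB x Xx).
have := le_trans (coord_le_norm y i) (HB y Xy).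
rewrite !ler_norml => /andP[hy1 hy2] /andP[hx1 hx2].
have : - (2 * B) <= x ord0 i - y ord0 i <= 2 * B by apply/andP; split; lra.
move=> /andP[h1 h2]; nra.
Qed.

End Bounded.

Section AttractorSubset.
Variables (R : realType) (n : nat) (I : finType).
Local Notation V := 'rV[R]_n.
Local Notation dist := (@eucl_dist R n).
Variables (X : set V) (S : I -> V -> V) (c : I -> R).
Hypothesis hc : forall i, 0 < c i < 1.
Hypothesis hSX : forall i x, X x -> X (S i x).
Hypothesis hsim : forall i x y, X x -> X y ->
  dist (S i x) (S i y) = c i * dist x y.
Variables (D : R) (F G : set V).
Hypothesis hD : forall x y, X x -> X y -> dist x y <= D.
Hypotheses (hFX : F `<=` X) (hF : F = \bigcup_(i in setT) (S i @` F)).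
Hypotheses (hGX : G `<=` X) (hG0 : G !=set0) (hGc : compact G).
Hypothesis hGS : forall i x, G x -> G (S i x).

Lemma self_similar_iter k x : F x ->
  exists w y, [/\ size w = k, F y & x = wmap S w y].
Proof.
move=> Fx; elim: k => [|k [w [y [sw Fy ->]]]]; first by exists [::], x.
have : (\bigcup_(i in setT) (S i @` F)) y by rewrite -hF.
case=> i _ [z Fz <-].
by exists (rcons w i), z; rewrite size_rcons sw -cats1 wmap_cat.
Qed.

Lemma invariant_iter w x : G x -> G (wmap S w x).
Proof. by elim: w => [|i w IH] //= Gx; apply: hGS; apply: IH. Qed.

(* The points S_w y, y in G, approach S_w x, x in F, as |w| grows, and G is closed. *)
Lemma self_similar_subset_invariant : F `<=` G.
Proof.
move=> x Fx.
have cl : closed G by apply: compact_closed => //; exact: norm_hausdorff.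
rewrite ((closure_id G).1 cl) => B /nbhs_ballP [e e0 HB].
have [y0 Gy0] := hG0.
have D1 : 0 < D + 1.
  by apply: ltr_wpDl ltr01; apply: le_trans (hD (hGX Gy0) (hGX Gy0)); exact: sqrtr_ge0.
have [q [hq Hq]] := contraction_ratio_bound hc.
have [k hk] := expr_lt hq (divr_gt0 e0 D1).
have [w [y [sw Fy xE]]] := self_similar_iter k Fx; subst x.
exists (wmap S w y0); split; first exact: invariant_iter.
apply: HB; rewrite -ball_normE /=; apply: le_lt_trans (norm_le_dist _ _) _.
rewrite (wmap_dist hSX hsim _ (hFX Fy) (hGX Gy0)).
apply: le_lt_trans (_ : q ^+ k * (D + 1) < e); last by rewrite -ltr_pdivlMr.
apply: ler_pM; [exact: ltW (wratio_gt0 hc w)|exact: sqrtr_ge0| |].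
  by rewrite -sw; exact: wratio_le_expr.
by apply: le_trans (hD (hFX Fy) (hGX Gy0)) _; rewrite lerDl.
Qed.

End AttractorSubset.

Section BoxDimensionBounds.
Variables (R : realType) (n : nat).
Local Notation V := 'rV[R]_n.
Variables (A : set V) (u : R).
Hypothesis A0 : A !=set0.

Lemma upper_box_dim_lt_coverable (D : R) : 0 <= u -> 0 < D ->
  (upper_box_dim A < u%:E)%E -> exists K : R,
  forall d : R, 0 < d <= D -> exists k, coverable A d k /\ k%:R <= K * d `^ (- u).
Proof.
move=> u0 D0 /upper_box_dim_lt [e [/andP[e0 e1] He]].
pose e' := e / 2.
have e'0 : 0 < e' by rewrite divr_gt0.
have e'e : e' < e by rewrite /e' ltr_pdivrMr // ltr_pMr // ltr1n.
have e'1 : 0 < e' < 1 by rewrite e'0 (lt_trans e'e e1).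
have e'e0 : 0 < e' < e by rewrite e'0 e'e.
have [k0 [hk0 bk0]] := box_ratio_lt A0 e'1 (He e' e'e0).
exists (Num.max 1 (e' `^ (- u) * D `^ u)) => d /andP[d0 dD].
have [de|ed] := ltP d e.
  have d01 : 0 < d < 1 by rewrite d0 (lt_trans de e1).
  have d0e : 0 < d < e by rewrite d0 de.
  have [k [hk bk]] := box_ratio_lt A0 d01 (He d d0e).
  exists k; split => //; apply: le_trans (ltW bk) _.
  by rewrite ler_peMl ?powR_ge0 // le_max lexx.
exists k0; split; first exact: coverable_le_diam (ltW (lt_le_trans e'e ed)) hk0.
apply: le_trans (ltW bk0) _.
rewrite -[leLHS]mulr1 -(mulr_powRN u D0) mulrA.
apply: ler_pM; rewrite ?mulr_ge0 ?powR_ge0 ?le_max ?lexx ?orbT //.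
exact: ler_powRN.
Qed.

(* With N_d(A) <= K d^-u the ratio is u + ln K / (- ln d), which drops below u + eps. *)
Lemma coverable_upper_box_dim_le (K e : R) : 1 <= K -> 0 < e ->
  (forall d : R, 0 < d < e -> exists m, coverable A d m /\ m%:R <= K * d `^ (- u)) ->
  (upper_box_dim A <= u%:E)%E.
Proof.
move=> K1 e0 HK; apply/lee_addgt0Pr => eps eps0.
have lnK0 : 0 <= ln K by rewrite ln_ge0.
have K0 : 0 < K := lt_le_trans ltr01 K1.
pose e' := Num.min (Num.min e 2^-1) (expR (- (ln K / eps))).
have e'0 : 0 < e' by rewrite !lt_min e0 expR_gt0 invr_gt0 ltr0n.
have e'1 : e' < 1.
  by rewrite !gt_min (_ : 2^-1 < 1 :> R) ?orbT //; lra.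
have e'01 : 0 < e' < 1 by rewrite e'0 e'1.
apply: (upper_box_dim_le e'01) => d /andP[d0 de'].
have hd : 0 < d < 1 by rewrite d0 (lt_trans de' e'1).
have d0e : 0 < d < e by rewrite d0 (lt_le_trans de') // !ge_min lexx.
have [m [hm bm]] := HK d d0e.
apply: le_trans (box_ratio_le A0 hd hm bm) _.
have lnd := oppr_ln_gt0 hd.
rewrite lee_fin lnM ?posrE ?powR_gt0 // ln_powR ler_pdivrMr //.
have : ln d < - (ln K / eps).
  rewrite -(expRK (- (ln K / eps))) ltr_ln ?posrE ?expR_gt0 //.
  by apply: lt_le_trans de' _; rewrite ge_min lexx orbT.
rewrite ltrNr ltr_pdivrMr // => lnK_lt.
nra.
Qed.

End BoxDimensionBounds.

Section ModifiedSimilarityDimension.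
Variables (R : realType) (n : nat) (I : finType).
Local Notation V := 'rV[R]_n.
Variables (X : set V) (S : I -> V -> V) (c : I -> R).
Hypothesis hc : forall i, 0 < c i < 1.
Local Notation wequiv := (wequiv X S).

Fixpoint wequiv_reps (s : seq (seq I)) : seq (seq I) :=
  if s is w :: s' then
    let r := wequiv_reps s' in
    if has (fun v => `[< wequiv w v >]) r then r else w :: r
  else [::].

Lemma wequiv_reps_subset s v : v \in wequiv_reps s -> v \in s.
Proof.
elim: s => [|w s IH] //=.
case: ifP => _; first by move/IH; rewrite inE => ->; rewrite orbT.
by rewrite !inE => /orP[->|/IH ->] //; rewrite orbT.
Qed.

Lemma wequiv_reps_cover s w : w \in s -> exists2 v, v \in wequiv_reps s & wequiv w v.
Proof.
elim: s => [|w' s IH] //=; rewrite inE => /orP[/eqP ->|/IH [v hv ev]].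
  case: ifP => [/hasP [v hv /asboolP ev]|_]; first by exists v.
  by exists w' => //; rewrite inE eqxx.
by exists v => //; case: ifP => _ //; rewrite inE hv orbT.
Qed.

Lemma wequiv_reps_inj s v1 v2 : v1 \in wequiv_reps s -> v2 \in wequiv_reps s ->
  wequiv v1 v2 -> v1 = v2.
Proof.
elim: s => [|w s IH] //=.
case: ifP => [_|/negbT/hasPn hn]; first exact: IH.
rewrite !inE => /orP[/eqP->|h1] /orP[/eqP->|h2] //.
- by move=> e; have := hn _ h2; rewrite (asboolT e).
- move=> e; have e' : wequiv w v1 by move=> x Xx; rewrite e.
  by have := hn _ h1; rewrite (asboolT e').
- exact: IH.
Qed.

Lemma wequiv_reps_uniq s : uniq (wequiv_reps s).
Proof.
elim: s => [|w s IH] //=.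
case: ifP => [_|/negbT/hasPn hn] //=; rewrite IH andbT.
by apply/negP => /hn; rewrite asboolT.
Qed.

Lemma alpha_spec_exists (i0 : I) (r : R) : 0 < r < 1 ->
  exists a, alpha_spec X S c r a.
Proof.
move=> hr; have [q [hq Hq]] := contraction_ratio_bound hc.
have [L hL] := expr_lt hq (proj1 (andP hr)).
pose reps := wequiv_reps [seq w <- words I L | `[< in_Ir c r w >]].
have Hin w : w \in reps -> in_Ir c r w.
  by move/wequiv_reps_subset; rewrite mem_filter => /andP[/asboolP].
have Hcov w : in_Ir c r w -> exists2 v, v \in reps & wequiv w v.
  move=> hw; apply: wequiv_reps_cover; rewrite mem_filter; apply/andP; split.
    exact/asboolP.
  exact: mem_words (in_Ir_size hc hq Hq hL hw).
have reps_neq0 : reps != [::].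
  have [v0 /Hcov [v1 hv1 _]] := exists_in_Ir hc i0 hr.
  by apply/eqP => reps0; rewrite reps0 in hv1.
have [a ha] : exists a, \sum_(w <- reps) wratio c w `^ a = 1.
  apply: (sum_powR_eq1 reps_neq0 (proj2 (andP hr))) => w /Hin /andP[wr _].
  by rewrite wratio_gt0.
by exists a, reps; split => //; [exact: wequiv_reps_uniq|exact: wequiv_reps_inj].
Qed.

Lemma lt_sum_wratio_powR reps (r a b : R) : r < 1 -> reps != [::] ->
  (forall w, w \in reps -> in_Ir c r w) -> a < b ->
  \sum_(w <- reps) wratio c w `^ b < \sum_(w <- reps) wratio c w `^ a.
Proof.
move=> r1 reps0 Hin; apply: (ltr_sum_powR reps0) => w /Hin /andP[wr _].
by rewrite wratio_gt0 //= (le_lt_trans wr r1).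
Qed.

Lemma alpha_spec_ge0 (r a : R) : r < 1 -> alpha_spec X S c r a -> 0 <= a.
Proof.
move=> r1 [reps [_ Hin _ _ hs]].
have reps0 : reps != [::] by apply/eqP => e; rewrite e big_nil in hs; lra.
rewrite leNgt; apply/negP => /(lt_sum_wratio_powR r1 reps0 Hin).
rewrite hs; apply/negP; rewrite -leNgt.
case: reps reps0 {Hin hs} => // w s _; rewrite big_cons powRr0 lerDl.
by apply: sumr_ge0 => v _; exact: powR_ge0.
Qed.

Lemma alpha_ge0 (r : R) : r < 1 -> 0 <= alpha X S c r.
Proof. by move=> r1; rewrite /alpha; case: xgetP => // a _ /(alpha_spec_ge0 r1). Qed.

Lemma alpha_lt (i0 : I) (r u : R) : 0 < r < 1 -> alpha X S c r < u ->
  exists reps : seq (seq I),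
    [/\ (forall w, w \in reps -> in_Ir c r w),
        (forall w, in_Ir c r w -> exists2 v, v \in reps & wequiv w v)
      & \sum_(w <- reps) wratio c w `^ u < 1].
Proof.
move=> hr hu; have := xgetPex 0 (alpha_spec_exists i0 hr).
move=> [reps [_ Hin Hcov _ hs]]; exists reps; split => //; rewrite -hs.
have reps0 : reps != [::] by apply/eqP => e; rewrite e big_nil in hs; lra.
exact: lt_sum_wratio_powR (proj2 (andP hr)) reps0 Hin hu.
Qed.

Lemma s_star_lt (u : R) : s_star X S c < u ->
  exists r : R, 0 < r < 1 /\ alpha X S c r < u.
Proof.
have half : 0 < (2^-1 : R) < 1 by apply/andP; split; lra.
have ne : [set alpha X S c r | r in [set r | 0 < r < 1]] !=set0.
  by exists (alpha X S c 2^-1), 2^-1.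
by move=> /(inf_lt ne) [_ [r hr <-] ru]; exists r.
Qed.

End ModifiedSimilarityDimension.

Section InhomogeneousAttractor.
Variables (R : realType) (n : nat) (I : finType).
Local Notation V := 'rV[R]_n.
Local Notation dist := (@eucl_dist R n).
Variables (X : set V) (S : I -> V -> V) (c : I -> R).
Hypothesis hc : forall i, 0 < c i < 1.
Hypothesis hSX : forall i x, X x -> X (S i x).
Hypothesis hsim : forall i x y, X x -> X y ->
  dist (S i x) (S i y) = c i * dist x y.
Variables (FC C : set V).
Hypotheses (hFCX : FC `<=` X) (hCX : C `<=` X).
Hypothesis hFC : FC = (\bigcup_(i in setT) (S i @` FC)) `|` C.
Variable D : R.
Hypothesis hD0 : 0 < D.
Hypothesis hD : forall x y, X x -> X y -> dist x y <= D.

(* Unfold FC = U_i S_i(FC) u C along a word until its ratio drops to rho or C is hit. *)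
Lemma inhomogeneous_decomp (rho q : R) L : rho < 1 -> 0 < q < 1 ->
  (forall i, c i <= q) -> q ^+ L < rho ->
  FC `<=` [set x | exists v z, [/\ in_Ir c rho v, FC z & x = wmap S v z]] `|`
         [set x | exists w z, [/\ (size w <= L)%N, C z & x = wmap S w z]].
Proof.
move=> rho1 hq Hq hL.
suff H m p y : rho < wratio c p -> (L <= size p + m)%N -> FC y ->
  (exists v z, [/\ in_Ir c rho v, FC z & wmap S p y = wmap S v z]) \/
  (exists w z, [/\ (size w <= L)%N, C z & wmap S p y = wmap S w z]).
  by move=> x FCx; apply: (H L [::] x) => //; rewrite /wratio big_nil.
elim: m p y => [|m IH] p y hp hs FCy.
  by have := size_lt_of_wratio_gt hc hq Hq hL hp; rewrite ltnNge -(addn0 (size p)) hs.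
have : ((\bigcup_(i in setT) (S i @` FC)) `|` C) y by rewrite -hFC.
case=> [[i _ [z FCz <-]]|Cy]; last first.
  right; exists p, y; split => //.
  exact/ltnW/(size_lt_of_wratio_gt hc hq Hq hL hp).
have -> : wmap S p (S i z) = wmap S (rcons p i) z by rewrite -cats1 wmap_cat.
have [le_rho|gt_rho] := leP (wratio c (rcons p i)) rho.
  by left; exists (rcons p i), z; rewrite /in_Ir wdagger_rcons le_rho hp.
by apply: IH => //; rewrite size_rcons addSnnS.
Qed.

Section CoverBound.
Variables (rho u K : R) (reps : seq (seq I)).
Hypotheses (hrho : 0 < rho < 1) (u0 : 0 <= u).
Hypothesis reps_Ir : forall w, w \in reps -> in_Ir c rho w.
Hypothesis reps_cover :
  forall w, in_Ir c rho w -> exists2 v, v \in reps & wequiv X S w v.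
Hypothesis hK :
  forall d : R, 0 < d <= D -> exists k, coverable C d k /\ k%:R <= K * d `^ (- u).
Local Notation theta := (\sum_(w <- reps) wratio c w `^ u).

Lemma inhomogeneous_cover : exists L,
  FC `<=` (\bigcup_(v in [set v | v \in reps]) (wmap S v @` FC)) `|`
          (\bigcup_(w in [set w | w \in words I L]) (wmap S w @` C)).
Proof.
have [q [hq Hq]] := contraction_ratio_bound hc.
have [L hL] := expr_lt hq (proj1 (andP hrho)).
exists L => x /(inhomogeneous_decomp (proj2 (andP hrho)) hq Hq hL).
case=> [[v [z [hv FCz ->]]]|[w [z [hw Cz ->]]]]; last first.
  by right; exists w; [exact: mem_words|exists z].
have [v' hv' ev] := reps_cover hv.
by left; exists v' => //; exists z; rewrite // ev //; exact: hFCX.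
Qed.

(* A cover of FC at scale d / c_v is mapped by S_v to a cover of S_v(FC) at scale d. *)
Lemma inhomogeneous_cover_step (A d : R) L :
  FC `<=` (\bigcup_(v in [set v | v \in reps]) (wmap S v @` FC)) `|`
          (\bigcup_(w in [set w | w \in words I L]) (wmap S w @` C)) ->
  (size (words I L))%:R * K <= A * (1 - theta) -> 0 < d <= D ->
  (forall v, v \in reps -> exists m,
     coverable FC (d / wratio c v) m /\ m%:R <= A * (d / wratio c v) `^ (- u)) ->
  exists m, coverable FC d m /\ m%:R <= A * d `^ (- u).
Proof.
move=> FC_sub MK hd IH; have /andP[d0 _] := hd.
have cover_reps v : v \in reps -> exists m,
    coverable (wmap S v @` FC) d m /\ m%:R <= A * d `^ (- u) * wratio c v `^ u.
  move=> /IH [m [hm bm]]; exists m; split.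
    have cv0 := wratio_gt0 hc v.
    have := coverable_image hFCX (wmap_dist hSX hsim v) (ltW cv0) hm.
    by rewrite mulrC divfK // gt_eqF.
  by rewrite -mulrA -powRN_div ?wratio_gt0.
have cover_words w : w \in words I L -> exists k,
    coverable (wmap S w @` C) d k /\ k%:R <= K * d `^ (- u).
  move=> _; have [k [hk bk]] := hK hd.
  exists k; split => //.
  apply: coverable_le_diam (_ : wratio c w * d <= d) _.
    by rewrite ler_piMl ?(ltW d0) ?wratio_le1.
  exact: coverable_image hCX (wmap_dist hSX hsim w) (ltW (wratio_gt0 hc w)) hk.
have [m1 [h1 b1]] := coverable_bigcup cover_reps.
have [m2 [h2 b2]] := coverable_bigcup cover_words.
exists (m1 + m2)%N; split; first exact: coverable_subset FC_sub (coverableU h1 h2).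
rewrite natrD; apply: le_trans (lerD b1 b2) _.
rewrite -big_distrr /= big_const_seq count_predT iter_addr_0 -mulr_natl.
have := powR_gt0 (- u) d0.
nra.
Qed.

Lemma inhomogeneous_cover_bound : theta < 1 -> exists A : R, 1 <= A /\
  forall d : R, 0 < d <= D -> exists m, coverable FC d m /\ m%:R <= A * d `^ (- u).
Proof.
move=> theta1; have [L FC_sub] := inhomogeneous_cover.
have /andP[rho0 _] := hrho.
pose m0 := \big[Num.min/1]_(w <- reps) wratio c w.
have m00 : 0 < m0 by apply: lt_bigmin => // w _; exact: wratio_gt0.
have m0_le1 : m0 <= 1 by exact: bigmin_le_id.
have m0_le v : v \in reps -> m0 <= wratio c v by move=> hv; exact: ge_bigmin_seq.
pose A := Num.max 1
  (Num.max ((D / m0) `^ u) ((size (words I L))%:R * K / (1 - theta))).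
have A1 : 1 <= A by rewrite le_max lexx.
have AD : (D / m0) `^ u <= A by rewrite !le_max lexx orbT.
have MK : (size (words I L))%:R * K <= A * (1 - theta).
  by rewrite -ler_pdivrMr ?subr_gt0 // !le_max lexx !orbT.
(* Rescaled scales d / c_v stay below D / m0, where one set is a cover within A d^-u. *)
have cover_large (d : R) : 0 < d -> D <= d -> d <= D / m0 ->
    exists m, coverable FC d m /\ m%:R <= A * d `^ (- u).
  move=> d0 Dd dm; exists 1%N; split; last exact: le1_mulr_powRN AD.
  by apply: coverable1 => x y FCx FCy; apply: le_trans Dd; apply: hD; apply: hFCX.
have cover_scale k (d : R) : 0 < d -> D * rho ^+ k <= d -> d <= D / m0 ->
    exists m, coverable FC d m /\ m%:R <= A * d `^ (- u).
  elim: k d => [|k IH] d d0 hk dm; have [Dd|dD] := leP D d; try exact: cover_large.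
    by rewrite expr0 mulr1 in hk; have := le_lt_trans hk dD; rewrite ltxx.
  apply: (inhomogeneous_cover_step FC_sub MK); first by rewrite d0 ltW.
  move=> v hv; have cv0 := wratio_gt0 hc v.
  have /andP[cv_rho _] := reps_Ir hv.
  apply: IH; first by rewrite divr_gt0.
    rewrite ler_pdivlMr //; apply: le_trans hk.
    by rewrite exprSr mulrA ler_wpM2l // mulr_ge0 ?exprn_ge0 ?ltW.
  rewrite ler_pdivrMr // mulrAC ler_pdivlMr //.
  exact: ler_pM (ltW d0) (ltW m00) (ltW dD) (m0_le _ hv).
exists A; split => // d /andP[d0 dD].
have [k hk] := expr_lt hrho (divr_gt0 d0 hD0).
apply: (cover_scale k) => //; first by rewrite mulrC -ler_pdivlMr // ltW.
apply: le_trans dD _; rewrite ler_pdivlMr //.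
exact: ler_piMr (ltW hD0) m0_le1.
Qed.

End CoverBound.

Hypotheses (hFC0 : FC !=set0) (hC0 : C !=set0).

Lemma upper_box_dim_inhomogeneous_le (i0 : I) (u : R) :
  s_star X S c < u -> (upper_box_dim C < u%:E)%E -> (upper_box_dim FC <= u%:E)%E.
Proof.
move=> /s_star_lt [r [hr ru]] dimC.
have u0 : 0 <= u := ltW (le_lt_trans (alpha_ge0 X S hc (proj2 (andP hr))) ru).
have [reps [Hin Hcov theta1]] := alpha_lt hc i0 hr ru.
have [K hK] := upper_box_dim_lt_coverable hC0 u0 hD0 dimC.
have [A [A1 HA]] := inhomogeneous_cover_bound hr u0 Hin Hcov hK theta1.
apply: (coverable_upper_box_dim_le hFC0 A1 hD0) => d /andP[d0 dD].
by apply: HA; rewrite d0 ltW.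
Qed.

End InhomogeneousAttractor.

Lemma lee_maxe_fin_gt (R : realType) (z b : \bar R) (a : R) :
  (forall u : R, a < u -> (b < u%:E)%E -> (z <= u%:E)%E) -> (z <= maxe a%:E b)%E.
Proof.
move=> Hz; have ha : (a%:E <= maxe a%:E b)%E by rewrite le_max lexx.
have hb : (b <= maxe a%:E b)%E by rewrite le_max lexx orbT.
move: ha hb; case: (maxe _ _) => [m| |] ha hb //; last by rewrite leey.
apply/lee_addgt0Pr => eps eps0; apply: Hz.
  by rewrite lee_fin in ha; rewrite (le_lt_trans ha) // ltrDl.
by apply: le_lt_trans hb _; rewrite lte_fin ltrDl.
Qed.

Theorem theorem5p1 (R : realType) (n : nat) (I : finType)
  (X : set 'rV[R]_n) (S : I -> 'rV[R]_n -> 'rV[R]_n) (c : I -> R)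
  (C FC F0 : set 'rV[R]_n) :
  compact X ->
  (forall i, 0 < c i < 1) ->
  (forall i x, X x -> X (S i x)) ->
  (forall i x y, X x -> X y ->
     eucl_dist (S i x) (S i y) = c i * eucl_dist x y) ->
  C `<=` X -> C !=set0 -> compact C ->
  FC `<=` X -> FC !=set0 -> compact FC ->
  FC = (\bigcup_(i in setT) (S i @` FC)) `|` C ->
  F0 `<=` X -> F0 !=set0 -> compact F0 ->
  F0 = \bigcup_(i in setT) (S i @` F0) ->
  (maxe (upper_box_dim F0) (upper_box_dim C) <= upper_box_dim FC)%E /\
  (upper_box_dim FC <= maxe (s_star X S c)%:E (upper_box_dim C))%E.
Proof.
move=> cX hc hSX hsim hCX hC0 _ hFCX hFC0 hFCc hFC hF0X hF00 _ hF0.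
have [D [D0 HD]] := compact_dist_bounded cX.
have FC_inv i x : FC x -> FC (S i x).
  by move=> FCx; rewrite hFC; left; exists i => //; exists x.
have F0_FC := self_similar_subset_invariant hc hSX hsim HD hF0X hF0 hFCX hFC0 hFCc FC_inv.
have C_FC : C `<=` FC by move=> x Cx; rewrite hFC; right.
split; first by rewrite ge_max !upper_box_dim_subset.
have [x] := hF00; rewrite hF0 => -[i0 _ _].
apply: lee_maxe_fin_gt.
exact: (upper_box_dim_inhomogeneous_le hc hSX hsim hFCX hCX hFC D0 HD hFC0 hC0 i0).
Qed.
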